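(* Let $E_2=R[w_2,w_3,\dots]$ be the $E_2$ page described in the context, set $W_+=k[b_{10}^{\pm1}][w_2,w_3,\dots]$ and $W_-=h_{10}W_+$, so $E_2=W_+\oplus W_-$. Let $x\in E_2$ be a nonzero element lying in a single filtration $s$ and a single degree $u'=u-6(s+t)$. If $u'\equiv 0\pmod 4$, then $x\in W_+$ and $s\equiv -u'\pmod 9$. Otherwise $u'\equiv 2\pmod 4$, in which case $x\in W_-$ and $s\equiv 7-u'\pmod 9$.
   Context: $k=\mathbb{F}_3$, $R=E[h_{10}]\otimes k[b_{10}^{\pm1}]$. The spectral sequence is the $b_{10}$-localized $K(\xi_1)$-based Adams spectral sequence converging to $b_{10}^{-1}\operatorname{Ext}_P(\mathbb{F}_3,\mathbb{F}_3)$ ($P$ the dual reduced powers at $p=3$), trigraded by filtration $s$, internal homological degree $t$ and internal topological degree $u$, with $E_2\cong R[w_2,w_3,\dots]$ a polynomial $R$-algebra. Degrees: $h_{10}$ has $(s,t,u)=(0,1,4)$, $b_{10}$ has $(0,2,12)$, $w_n$ ($n\geq2$) has $(1,1,2(3^n+1))$. Hence $u'(h_{10})=-2$, $u'(b_{10})=0$, $u'(w_n)=2(3^n-5)$. *)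

From HB Require Import structures.
From mathcomp Require Import all_boot all_order all_algebra.
From mathcomp Require Import finmap.
Set Implicit Arguments. Unset Strict Implicit. Unset Printing Implicit Defensive.
Import Order.TTheory GRing.Theory Num.Theory.
Local Open Scope fset_scope.

(* Exponent vector of a monomial in w_2, w_3, ... : finitely supported
   alpha : nat -> nat, where alpha i is the exponent of w_(i+2). *)
Definition Expo := {fsfun nat -> nat with 0%N}.

(* A monomial h10^eps * b10^j * prod_n w_n^(alpha (n-2)),
   eps \in {0,1} (E[h10] exterior), j \in Z (b10 inverted). *)
Definition Mon := (bool * int * Expo)%type.

Definition mon_h (m : Mon) : bool := m.1.1.
Definition mon_b (m : Mon) : int := m.1.2.
Definition mon_w (m : Mon) : Expo := m.2.

(* E_2 = R[w_2,w_3,...] over k = F_3, as a k-vector space: finitely supported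
   F_3-valued functions on the monomial basis. *)
Definition E2 := {fsfun Mon -> 'F_3 with 0%R}.

(* degrees of w_(i+2) : (s,t,u) = (1, 1, 2(3^(i+2)+1)) *)
Definition w_u (i : nat) : int := (2 * (3 ^ (i.+2) + 1))%N%:Z.

Definition mon_s (m : Mon) : nat := (\sum_(i <- finsupp (mon_w m)) mon_w m i)%N.
Definition mon_t (m : Mon) : int :=
  ((mon_h m : nat)%:Z + 2 * mon_b m + (mon_s m)%:Z)%R.
Definition mon_u (m : Mon) : int :=
  (4 * (mon_h m : nat)%:Z + 12 * mon_b m
   + \sum_(i <- finsupp (mon_w m)) ((mon_w m i)%:Z * w_u i))%R.
Definition mon_u' (m : Mon) : int :=
  (mon_u m - 6 * ((mon_s m)%:Z + mon_t m))%R.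

Definition homog (x : E2) (s : nat) (u' : int) : Prop :=
  forall m, m \in finsupp x -> mon_s m = s /\ mon_u' m = u'.

(* W_+ = k[b10^{+-1}][w_2,...] : spanned by monomials without h10;
   W_- = h10 W_+ : spanned by monomials containing h10. *)
Definition inWplus (x : E2) : Prop := forall m, m \in finsupp x -> mon_h m = false.
Definition inWminus (x : E2) : Prop := forall m, m \in finsupp x -> mon_h m = true.

From HB Require Import structures.
From mathcomp Require Import all_boot all_order all_algebra.
From mathcomp Require Import finmap zify ring.
Import Order.TTheory GRing.Theory Num.Theory.
Local Open Scope fset_scope.

(* Since u = 4 eps + 12 j + sum a_n u(w_n) and 6 (s + t) = 6 eps + 12 j + 12 s,
   the degree u' of a monomial h10^eps b10^j prod w_n^(a_n) is
   -2 eps + sum a_n u'(w_n) with u'(w_n) = 2 (3^n - 5).  Every u'(w_n) is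
   divisible by 4 (as 3^n is odd) and congruent to -1 modulo 9 (as n >= 2), so
   u' = -2 eps (mod 4) and u' = -2 eps - s (mod 9).  Hence u' mod 4 determines
   eps, and then s modulo 9. *)

Local Open Scope ring_scope.

(* The degree u' of w_(i+2), which has s = t = 1. *)
Definition w_u' (i : nat) : int := w_u i - 12.

Lemma Posz_sum {I : Type} (r : seq I) (F : I -> nat) :
  (\sum_(i <- r) F i)%N%:Z = \sum_(i <- r) (F i)%:Z.
Proof. exact: (big_morph Posz PoszD). Qed.

Lemma mon_u'E (m : Mon) :
  mon_u' m = - 2 * (mon_h m : nat)%:Z
             + \sum_(i <- finsupp (mon_w m)) (mon_w m i)%:Z * w_u' i.
Proof.
rewrite /mon_u' /mon_t /mon_u /mon_s /w_u'.
set r := finsupp _; set a := mon_w m.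
rewrite Posz_sum.
have -> : \sum_(i <- r) (a i)%:Z * (w_u i - 12)
          = \sum_(i <- r) (a i)%:Z * w_u i - 12 * \sum_(i <- r) (a i)%:Z.
  rewrite big_distrr -sumrB; apply: eq_bigr => i _; ring.
ring.
Qed.

Lemma w_u'_mod4 (i : nat) : (w_u' i = 0 %[mod 4])%Z.
Proof.
have [q hq] : exists q, (3 ^ i = q.*2.+1)%N.
  by exists (3 ^ i)./2; rewrite -[in LHS](odd_double_half (3 ^ i)) oddX orbT.
apply/eqP; rewrite eqz_mod_dvd subr0; apply/dvdzP; exists (9 * q%:Z + 2).
by rewrite /w_u' /w_u !expnS mulnA hq; lia.
Qed.

Lemma w_u'_mod9 (i : nat) : (w_u' i = -1 %[mod 9])%Z.
Proof.
apply/eqP; rewrite eqz_mod_dvd opprK; apply/dvdzP; exists (2 * (3 ^ i)%N%:Z - 1).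
by rewrite /w_u' /w_u !expnS mulnA; lia.
Qed.

Lemma modz_sum_scale {I : Type} {f : I -> int} {d c : int}
    (r : seq I) (a : I -> nat) :
  (forall i, f i = c %[mod d])%Z ->
  (\sum_(i <- r) (a i)%:Z * f i = c * (\sum_(i <- r) a i)%N%:Z %[mod d])%Z.
Proof.
move=> f_mod; apply/eqP; rewrite eqz_mod_dvd Posz_sum big_distrr -sumrB.
apply: rpred_sum => i _; rewrite /= [X in _ - X]mulrC -mulrBr dvdz_mull //.
by rewrite -eqz_mod_dvd f_mod.
Qed.

Lemma mon_u'_mod4 (m : Mon) :
  (mon_u' m %% 4)%Z = if mon_h m then 2 else 0.
Proof.
have := modz_sum_scale (finsupp (mon_w m)) (mon_w m) w_u'_mod4.
rewrite mul0r mod0z mon_u'E => S_mod4.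
by rewrite -modzDmr S_mod4 addr0; case: (mon_h m).
Qed.

Lemma mon_s_mod9 (m : Mon) :
  ((mon_s m)%:Z = (if mon_h m then 7 else 0) - mon_u' m %[mod 9])%Z.
Proof.
have /eqP := modz_sum_scale (finsupp (mon_w m)) (mon_w m) w_u'_mod9.
rewrite eqz_mod_dvd; set S := \sum_(i <- _) _ => dvdS.
apply/eqP; rewrite eqz_mod_dvd mon_u'E -/S.
have -> : (mon_s m)%:Z - ((if mon_h m then 7 else 0) - (-2 * (mon_h m : nat)%:Z + S))
          = (S - (-1) * (mon_s m)%:Z) - 9 * (mon_h m : nat)%:Z.
  by case: (mon_h m); rewrite /=; ring.
by rewrite rpredB // dvdz_mulr.
Qed.

Local Close Scope ring_scope.

Theorem lemma2p2 (x : E2) (s : nat) (u' : int) :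
  finsupp x != fset0 -> homog x s u' ->
  (((u' %% 4)%Z = 0%R -> inWplus x /\ (s%:Z = - u' %[mod 9])%Z) /\
   ((u' %% 4)%Z <> 0%R ->
      (u' %% 4)%Z = 2%R /\ inWminus x /\ (s%:Z = 7 - u' %[mod 9])%Z)).
Proof.
move=> /fset0Pn [m0 xm0] hom.
have u'_mod4 m : m \in finsupp x -> (u' %% 4)%Z = if mon_h m then 2%R else 0%R.
  by move=> /hom [_ <-]; apply: mon_u'_mod4.
have s_mod9 m : m \in finsupp x ->
    (s%:Z = (if mon_h m then 7%R else 0%R) - u' %[mod 9])%Z.
  by move=> /hom [<- <-]; apply: mon_s_mod9.
split=> [u'0 | u'n0].
- have h_false m : m \in finsupp x -> mon_h m = false.
    by move=> /[dup] /u'_mod4; rewrite u'0; case: (mon_h m).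
  by split=> //; rewrite (s_mod9 _ xm0) h_false ?sub0r.
- have h_true m : m \in finsupp x -> mon_h m = true.
    by move=> /[dup] /u'_mod4; case: (mon_h m) => // ->.
  by rewrite (u'_mod4 _ xm0) (s_mod9 _ xm0) !h_true.
Qed.
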